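(* The language ${\rm ss}(\{0,1\}^* )=\bigcup_{x\in\{0,1\}^*}(x \,\text{ш}\, x)$ is not context-free. In particular, there is a regular language $L$ such that ${\rm ss}(L)$ is not context-free.
   Context: For words $x,y$, the (ordinary) shuffle $x \,\text{ш}\, y$ is the finite set of all words $z = x_1y_1x_2y_2\cdots x_ny_n$ for some $n\ge 1$ and words $x_1,\dots,x_n,y_1,\dots,y_n$ (possibly empty) with $x=x_1\cdots x_n$ and $y=y_1\cdots y_n$. For a language $L$, ${\rm ss}(L)=\bigcup_{x\in L}(x\,\text{ш}\,x)$. *)

(* Words over the binary alphabet {0,1} are [seq bool]
   (false = 0, true = 1). *)
From HB Require Import structures.
From mathcomp Require Import all_boot.
From Stdlib Require Import Relation_Operators.
From Stdlib Require List.

Set Implicit Arguments.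
Unset Strict Implicit.
Unset Printing Implicit Defensive.

Definition language (T : Type) := seq T -> Prop.

(* Ordinary shuffle, exactly as in the paper: z is in x ш y iff
   z = x_1 y_1 x_2 y_2 ... x_n y_n for some n >= 1 and words x_i, y_i
   (possibly empty) with x = x_1...x_n and y = y_1...y_n.
   The list [ps] is the list of pairs (x_i, y_i). *)
Definition shuffle (T : Type) (x y z : seq T) : Prop :=
  exists ps : seq (seq T * seq T),
    [/\ 1 <= size ps,
        x = flatten (map fst ps),
        y = flatten (map snd ps) &
        z = flatten (map (fun p => p.1 ++ p.2) ps)].

Definition ss (T : Type) (L : language T) : language T :=
  fun z => exists x, L x /\ shuffle x x z.

Definition all_words (T : Type) : language T := fun _ => True.

Record cfg (T : Type) := CFG {
  cfg_nt : finType;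
  cfg_start : cfg_nt;
  cfg_rules : seq (cfg_nt * seq (cfg_nt + T))
}.

Definition cfg_step (T : Type) (g : cfg T)
    (u v : seq (cfg_nt g + T)) : Prop :=
  exists l r A rhs,
    [/\ List.In (A, rhs) (cfg_rules g),
        u = l ++ inl A :: r &
        v = l ++ rhs ++ r].

Definition cfg_derives (T : Type) (g : cfg T) :=
  clos_refl_trans (seq (cfg_nt g + T)) (@cfg_step T g).

Definition cfg_lang (T : Type) (g : cfg T) : language T :=
  fun w => @cfg_derives T g [:: inl (cfg_start g)] (map inr w).

Definition context_free (T : Type) (L : language T) : Prop :=
  exists g : cfg T, forall w, L w <-> cfg_lang g w.

Record dfa (T : Type) := DFA {
  dfa_state : finType;
  dfa_init : dfa_state;
  dfa_accept : pred dfa_state;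
  dfa_trans : dfa_state -> T -> dfa_state
}.

Definition dfa_lang (T : Type) (A : dfa T) : language T :=
  fun w => @dfa_accept T A (foldl (@dfa_trans T A) (@dfa_init T A) w).

Definition regular (T : Type) (L : language T) : Prop :=
  exists A : dfa T, forall w, L w <-> dfa_lang A w.

(* The proof follows the classical route: ss({0,1}^* ) is not context-free
   because its intersection with the regular language 0*1*0*1* is not.
   Instead of proving closure of context-free languages under intersection
   with regular languages, we prove a pumping lemma for context-free grammars
   that is synchronised with an arbitrary deterministic automaton: the two
   pumped factors u and y of a long word x u v y z can be chosen so that each
   of them reads a loop of the automaton. *)
From mathcomp Require Import all_boot.
From Stdlib Require Import Relation_Operators Operators_Properties.
From Stdlib Require List.
From mathcomp Require Import zify.
Set Implicit Arguments.
Unset Strict Implicit.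
Unset Printing Implicit Defensive.

Section Grammar.
Variable g : cfg bool.
Local Notation N := (cfg_nt g).
Local Notation sym := ((N + bool)%type).
Local Notation derives := (@cfg_derives bool g).
Local Notation terms := (map (@inr N bool)).

(* A forest is a sequence of parse trees: terminal leaves and nonterminal
   nodes [Fnode A children rest]. *)
Inductive forest := Fnil | Fleaf of bool & forest | Fnode of N & forest & forest.

Fixpoint roots f : seq sym := match f with
  | Fnil => [::]
  | Fleaf a r => inr a :: roots r
  | Fnode A _ r => inl A :: roots r
  end.

Fixpoint yield f : seq bool := match f with
  | Fnil => [::]
  | Fleaf a r => a :: yield r
  | Fnode _ s r => yield s ++ yield r
  end.

Fixpoint valid f : Prop := match f with
  | Fnil => True
  | Fleaf _ r => valid r
  | Fnode A s r => [/\ List.In (A, roots s) (cfg_rules g), valid s & valid r]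
  end.

Fixpoint fcat f1 f2 := match f1 with
  | Fnil => f2
  | Fleaf a r => Fleaf a (fcat r f2)
  | Fnode A s r => Fnode A s (fcat r f2)
  end.

Lemma roots_fcat f1 f2 : roots (fcat f1 f2) = roots f1 ++ roots f2.
Proof. by elim: f1 => //= [a r -> | A s _ r ->]. Qed.

Lemma yield_fcat f1 f2 : yield (fcat f1 f2) = yield f1 ++ yield f2.
Proof. by elim: f1 => //= [a r -> | A s _ r ->]; rewrite ?catA. Qed.

Lemma valid_fcat f1 f2 : valid f1 -> valid f2 -> valid (fcat f1 f2).
Proof. by elim: f1 => //= [A s _ r IH] [? ? ?] ?; split; auto. Qed.

Lemma forest_split l r f : roots f = l ++ r -> valid f ->
  exists f1 f2, [/\ roots f1 = l, roots f2 = r, valid f1, valid f2 &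
                    yield f = yield f1 ++ yield f2].
Proof.
elim: l f => [|x l IH] f /=; first by move=> Hr Hv; exists Fnil, f.
case: f => //= [a f' | A s f'] [<- Hr] Hv.
  have [f1 [f2 [<- H2 H3 H4 ->]]] := IH _ Hr Hv.
  by exists (Fleaf a f1), f2.
case: Hv => Hin Hs Hv; have [f1 [f2 [<- H2 H3 H4 ->]]] := IH _ Hr Hv.
by exists (Fnode A s f1), f2; rewrite catA.
Qed.

Lemma derives_refl u : derives u u.
Proof. exact: rt_refl. Qed.

Lemma derives_trans u v w : derives u v -> derives v w -> derives u w.
Proof. exact: rt_trans. Qed.

Lemma derives_ctx p q u v : derives u v -> derives (p ++ u ++ q) (p ++ v ++ q).
Proof.
elim=> [x y [l [r [A [rhs [Hin -> ->]]]]] | x | x y z _ H1 _ H2].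
- by apply: rt_step; exists (p ++ l), (r ++ q), A, rhs; rewrite -!catA.
- exact: rt_refl.
- exact: rt_trans H1 H2.
Qed.

Lemma derives_cat u u' v v' :
  derives u u' -> derives v v' -> derives (u ++ v) (u' ++ v').
Proof.
move=> H1 H2; apply: (@derives_trans _ (u' ++ v)).
  by have := derives_ctx [::] v H1.
by have := derives_ctx u' [::] H2; rewrite !cats0.
Qed.

Lemma derives_rule A rhs r :
  List.In (A, rhs) (cfg_rules g) -> derives (inl A :: r) (rhs ++ r).
Proof. by move=> Hin; apply: rt_step; exists [::], r, A, rhs. Qed.

Lemma forest_derives f : valid f -> derives (roots f) (terms (yield f)).
Proof.
elim: f => /= [_ | a r IH Hv | A s IHs r IHr [Hin Hs Hr]].
- exact: derives_refl.
- exact: (derives_cat (derives_refl [:: inr a]) (IH Hv)).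
- apply: derives_trans (derives_rule _ Hin) _.
  by rewrite map_cat; apply: derives_cat; auto.
Qed.

Fixpoint leaves (w : seq bool) := if w is a :: w' then Fleaf a (leaves w') else Fnil.

Lemma derives_forest u w : derives u (terms w) ->
  exists f, [/\ valid f, roots f = u & yield f = w].
Proof.
move=> H0; have {H0} := @clos_rt_rt1n _ _ _ _ H0.
move Ev: (terms w) => v H.
elim: H Ev => [x <- | x y z [l [r [A [rhs [Hin -> ->]]]]] _ IH Ev].
  by exists (leaves w); split; elim: w => //= a w ->.
have [f [Hv Hr <-]] := IH Ev.
have [f1 [f23 [H1 H23 Hv1 Hv23 ->]]] := forest_split Hr Hv.
have [f2 [f3 [H2 <- Hv2 Hv3 ->]]] := forest_split H23 Hv23.
exists (fcat f1 (Fnode A f2 f3)); split.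
- by apply: valid_fcat => //=; rewrite H2.
- by rewrite roots_fcat /= H1.
- by rewrite yield_fcat.
Qed.

Definition width := (foldr (fun r acc => maxn (size r.2) acc) 0 (cfg_rules g)).+2.

Lemma rule_size A rhs : List.In (A, rhs) (cfg_rules g) -> size rhs < width.
Proof.
rewrite /width; elim: (cfg_rules g) => //= [[B r] l IH] [[_ ->] | /IH] /=; lia.
Qed.

Lemma width_exp_gt0 k : 0 < width ^ k.
Proof. by rewrite expn_gt0. Qed.

Fixpoint nonempty_roots f : nat := match f with
  | Fnil => 0
  | Fleaf _ r => (nonempty_roots r).+1
  | Fnode _ s r => (yield s != [::]) + nonempty_roots r
  end.

Lemma nonempty_roots_le f : nonempty_roots f <= size (roots f).
Proof. by elim: f => //= A s _ r; case: (yield s != [::]) => /=; lia. Qed.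

Lemma nonempty_roots_yield f : 0 < nonempty_roots f -> yield f != [::].
Proof.
elim: f => //= A s _ r IH.
by case: (yield s =P [::]) => [-> /IH | /eqP]; [|case: (yield s)].
Qed.

Variable S : finType.
Variable d : S -> bool -> S.
Local Notation run := (foldl d).

(* The label of a node records its nonterminal together with the states of
   the automaton before and after reading its yield; [labels q f] collects the
   labels of the branching nodes of [f] (at least two children with nonempty
   yield) when [f] is read from state [q]. *)
Fixpoint labels q f : {set N * S * S} := match f with
  | Fnil => set0
  | Fleaf a r => labels (d q a) r
  | Fnode A s r =>
      (if 1 < nonempty_roots s then [set (A, q, run q (yield s))] else set0)
      :|: labels q s :|: labels (run q (yield s)) r
  end.

Fixpoint no_repeat q f : bool := match f with
  | Fnil => true
  | Fleaf a r => no_repeat (d q a) r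
  | Fnode A s r =>
      [&& no_repeat q s, no_repeat (run q (yield s)) r &
          (1 < nonempty_roots s) ==> ((A, q, run q (yield s)) \notin labels q s)]
  end.

Definition nlabels := #|{: N * S * S}|.
Definition pump_const := width ^ nlabels.+1.

(* Without repeated labels, every branching node adds a new label, so the
   yield is bounded exponentially in the number of labels. *)
Lemma yield_bound q f : valid f -> no_repeat q f ->
  size (yield f) <= nonempty_roots f * width ^ #|labels q f|.
Proof.
elim: f q => [|a r IH|A s IHs r IHr] q //=.
  move=> Hv Hg; have := IH _ Hv Hg; rewrite mulSn.
  by have := width_exp_gt0 #|labels (d q a) r|; move: (width ^ _) => X; lia.
move=> [Hin Hs Hr] /and3P [gs gr gc].
set q' := run q (yield s); set L := (_ :|: _ :|: _).
have sub_s : #|labels q s| <= #|L|.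
  by apply: subset_leq_card; rewrite /L -setUA setUCA subsetUl.
have sub_r : #|labels q' r| <= #|L|.
  by apply: subset_leq_card; rewrite /L subsetUr.
have bound_r : size (yield r) <= nonempty_roots r * width ^ #|L|.
  by rewrite (leq_trans (IHr q' Hr gr)) // leq_mul2l leq_pexp2l ?orbT.
have bound_s : size (yield s) <= (yield s != [::]) * width ^ #|L|.
  case: (yield s =P [::]) => [-> //| _]; rewrite mul1n.
  apply: leq_trans (IHs q Hs gs) _.
  have width_s : nonempty_roots s <= width.
    by have := nonempty_roots_le s; have := rule_size Hin; lia.
  case: (ltnP 1 (nonempty_roots s)) gc => [branching | ] /=; last first.
    by move=> le1 _; rewrite (leq_trans (leq_mul le1 (leq_pexp2l _ sub_s))) ?mul1n.
  move=> fresh; have new_label : #|labels q s| < #|L|.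
    apply: (@leq_trans #|(A, q, q') |: labels q s|); first by rewrite cardsU1 fresh.
    by apply: subset_leq_card; rewrite /L branching subsetUl.
  by rewrite (leq_trans (leq_mul width_s (leqnn _))) // -expnS leq_pexp2l.
by rewrite size_cat mulnDl leq_add.
Qed.

Lemma label_context q f B q1 q2 : valid f -> (B, q1, q2) \in labels q f ->
  exists x v z, [/\ yield f = x ++ v ++ z,
     derives (roots f) (terms x ++ inl B :: terms z), derives [:: inl B] (terms v),
     run q x = q1 /\ run q1 v = q2 & (1 < nonempty_roots f -> x ++ z != [::])].
Proof.
elim: f q => [|a r IH|A s IHs r IHr] q /=; first by rewrite inE.
  move=> Hv /(IH _ Hv) [x [v [z [-> Hd Hd2 Hq Hne]]]].
  exists (a :: x), v, z; split => //.
  exact: (derives_cat (derives_refl [:: inr a]) Hd).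
move=> [Hin Hs Hr]; rewrite !in_setU => /orP [/orP [H|H]|H].
- case: ifP H => branching; rewrite ?inE // => /eqP [-> -> ->].
  exists [::], (yield s), (yield r); split => //.
  + exact: (derives_cat (derives_refl [:: inl A]) (forest_derives Hr)).
  + apply: derives_trans (derives_rule [::] Hin) _.
    by rewrite cats0; apply: forest_derives.
  + move=> H1; apply: nonempty_roots_yield; move: H1.
    by case: (yield s != [::]) => /=; lia.
- have [x [v [z [Hy Hd Hd2 Hq Hne]]]] := IHs _ Hs H.
  exists x, v, (z ++ yield r); split => //; first by rewrite Hy -!catA.
    apply: derives_trans (derives_rule _ Hin) _.
    by have := derives_cat Hd (forest_derives Hr); rewrite map_cat -!catA.
  move=> H1; rewrite catA; case: (x ++ z) => //=; apply: nonempty_roots_yield.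
  by move: H1; case: (yield s != [::]) => /=; lia.
- have [x [v [z [Hy Hd Hd2 [Hq1 Hq2] Hne]]]] := IHr _ Hr H.
  exists (yield s ++ x), v, z; split => //; first by rewrite Hy -!catA.
  + apply: derives_trans (derives_rule _ Hin) _.
    by have := derives_cat (forest_derives Hs) Hd; rewrite map_cat -!catA.
  + by rewrite foldl_cat.
  + case: (yield s =P [::]) => [-> H1 | ]; first exact: Hne.
    by case: (yield s).
Qed.

Definition pump_split q (w : seq bool) (t : seq sym) : Prop :=
  exists A x u v y z, [/\ w = x ++ u ++ v ++ y ++ z,
     derives t (terms x ++ inl A :: terms z),
     derives [:: inl A] (terms u ++ inl A :: terms y),
     derives [:: inl A] (terms v) &
     [/\ u ++ y != [::], size (u ++ v ++ y) <= pump_const,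
         run (run q x) u = run q x &
         run (run q (x ++ u ++ v)) y = run q (x ++ u ++ v)]].

Lemma pump_split_ctx q p s w t t' :
  pump_split (run q p) w t -> derives t' (terms p ++ t ++ terms s) ->
  pump_split q (p ++ w ++ s) t'.
Proof.
move=> [A [x [u [v [y [z [-> Hd Hu Hv [Huy Hsz Lu Ly]]]]]]]] Ht.
exists A, (p ++ x), u, v, y, (z ++ s); split => //; first by rewrite -!catA.
  apply: derives_trans Ht _.
  by have := derives_ctx (terms p) (terms s) Hd; rewrite !map_cat -!catA.
by split=> //; rewrite -?catA foldl_cat.
Qed.

Lemma repeated_label_split A q s :
  List.In (A, roots s) (cfg_rules g) -> valid s -> no_repeat q s ->
  1 < nonempty_roots s -> (A, q, run q (yield s)) \in labels q s ->
  pump_split q (yield s) [:: inl A].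
Proof.
move=> Hin Hs gs branching /(label_context Hs) [x [v [z [Hy Hd Hv [Lx Lv] Hne]]]].
exists A, [::], x, v, z, [::]; split => //.
- by rewrite Hy cats0.
- exact: derives_refl.
- by apply: derives_trans (derives_rule [::] Hin) _; rewrite cats0.
split => //.
- exact: Hne.
- rewrite -Hy; apply: leq_trans (yield_bound Hs gs) _.
  rewrite /pump_const expnS leq_mul ?leq_pexp2l ?max_card //.
  by have := nonempty_roots_le s; have := rule_size Hin; lia.
- rewrite /= foldl_cat Lx Lv.
  by have := congr1 (run q) Hy; rewrite !foldl_cat Lx Lv => <-.
Qed.

Lemma repeat_pump_split q f : valid f -> ~~ no_repeat q f ->
  pump_split q (yield f) (roots f).
Proof.
elim: f q => [|a r IH|A s IHs r IHr] q //=.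
  move=> Hv /(IH _ Hv) H; rewrite -[_ :: _]cats0.
  by apply: (@pump_split_ctx q [:: a]) H _; rewrite /= cats0; apply: derives_refl.
move=> [Hin Hs Hr] bad; have Dr := forest_derives Hr.
have ctx_r w : pump_split q w [:: inl A] -> pump_split q (w ++ yield r) (inl A :: roots r).
  move=> H; apply: (@pump_split_ctx q [::] (yield r)) H _.
  exact: (derives_cat (derives_refl [:: inl A]) Dr).
case: (boolP (no_repeat q s)) => gs; last first.
  apply: ctx_r; rewrite -[yield s]cats0.
  apply: (@pump_split_ctx q [::] [::] _ (roots s)); first exact: IHs.
  by rewrite /=; apply: derives_rule.
case: (boolP (no_repeat (run q (yield s)) r)) => gr; last first.
  rewrite -[yield r]cats0; apply: (@pump_split_ctx q (yield s) [::]); first exact: IHr.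
  apply: derives_trans (derives_rule _ Hin) _; rewrite cats0.
  exact: derives_cat (forest_derives Hs) (derives_refl _).
move: bad; rewrite gs gr /= negb_imply negbK => /andP [branching Hl].
by apply: ctx_r; apply: repeated_label_split.
Qed.

Definition rep i (u : seq bool) := flatten (nseq i u).

Lemma repSr i (y : seq bool) : rep i.+1 y = rep i y ++ y.
Proof.
have repS j t : rep j.+1 t = t ++ rep j t by [].
elim: i => [|i IH]; first by rewrite /rep /= cats0.
by rewrite [LHS]repS [in LHS]IH catA -repS.
Qed.

Lemma rep_derives A u y i :
  derives [:: inl A] (terms u ++ inl A :: terms y) ->
  derives [:: inl A] (terms (rep i u) ++ inl A :: terms (rep i y)).
Proof.
move=> H; elim: i => [|i IH]; first exact: derives_refl.
apply: derives_trans H _.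
have := derives_ctx (terms u) (terms y) IH.
by rewrite (repSr i y) (_ : rep i.+1 u = u ++ rep i u) // !map_cat -!catA.
Qed.

Lemma sync_pumping q0 w : cfg_lang g w -> pump_const <= size w ->
  exists x u v y z, [/\ w = x ++ u ++ v ++ y ++ z, u ++ y != [::],
     size (u ++ v ++ y) <= pump_const,
     run (run q0 x) u = run q0 x /\
     run (run q0 (x ++ u ++ v)) y = run q0 (x ++ u ++ v) &
     forall i, cfg_lang g (x ++ rep i u ++ v ++ rep i y ++ z)].
Proof.
move=> /derives_forest [f [Hv Hr <-]] Hsize.
case: (boolP (no_repeat q0 f)) => Hg.
  have := yield_bound Hv Hg.
  have : nonempty_roots f <= 1 by rewrite (leq_trans (nonempty_roots_le _)) // Hr.
  have : width ^ #|labels q0 f| < pump_const by rewrite ltn_exp2l // ltnS max_card.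
  by move: Hsize; case: (nonempty_roots f) => [|[|]] //=; lia.
have [A [x [u [v [y [z [-> Hd Hu Hvd [Huy Hsz Lu Ly]]]]]]]] := repeat_pump_split Hv Hg.
exists x, u, v, y, z; split => // i; rewrite /cfg_lang -Hr.
apply: derives_trans Hd _.
have Hv' := derives_ctx (terms (rep i u)) (terms (rep i y)) Hvd.
have := derives_ctx (terms x) (terms z) (derives_trans (rep_derives i Hu) Hv').
by rewrite /= !map_cat -!catA.
Qed.

End Grammar.

Local Notation SS := (ss (@all_words bool)).

Lemma shuffle_mask (x y z : seq bool) : shuffle x y z ->
  exists m, [/\ size m = size z, mask m z = x & mask (map negb m) z = y].
Proof.
move=> [ps [_ -> -> ->]].
elim: ps => [|[p1 p2] ps [m [Hs H1 H2]]] /=; first by exists [::].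
exists (nseq (size p1) true ++ nseq (size p2) false ++ m); split.
- by rewrite !size_cat !size_nseq Hs addnA.
- by rewrite -catA !mask_cat ?size_nseq // mask_true // mask_false H1.
- rewrite !map_cat !map_nseq /= -catA !mask_cat ?size_nseq ?size_map //.
  by rewrite mask_true // mask_false H2.
Qed.

Lemma count_mask (p : pred bool) m s : size m = size s ->
  count p (mask m s) + count p (mask (map negb m) s) = count p s.
Proof.
elim: m s => [|b m IH] [|x s] //= [/IH]; by case: b => /=; lia.
Qed.

Lemma ss_count_even (b : bool) z : SS z -> count_mem b z %% 2 = 0.
Proof.
move=> [x [_ /shuffle_mask [m [Hs H1 H2]]]].
by have := count_mask (pred1 b) Hs; rewrite H1 H2 => <-; lia.
Qed.

Lemma mask_nseq (m : bitseq) n (a : bool) :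
  size m = n -> mask m (nseq n a) = nseq (count id m) a.
Proof. by move=> <-; elim: m => //= b m IH; case: b => /=; rewrite IH. Qed.

Lemma count_negb t : count id (map negb t) + count id t = size t.
Proof. by elim: t => //= b t; case: b => /=; lia. Qed.

Lemma mask_nseq_cat m n (a : bool) s : size m = n + size s ->
  exists k, [/\ k <= n,
    mask m (nseq n a ++ s) = nseq k a ++ mask (drop n m) s &
    mask (map negb m) (nseq n a ++ s) = nseq (n - k) a ++ mask (map negb (drop n m)) s].
Proof.
move=> Hs; have Ht : size (take n m) = n by rewrite size_takel // Hs leq_addr.
exists (count id (take n m)); split.
- by rewrite -{2}Ht count_size.
- by rewrite -{1}(cat_take_drop n m) mask_cat ?size_nseq // (mask_nseq _ Ht).
- rewrite -{1}(cat_take_drop n m) map_cat mask_cat ?size_nseq ?size_map //.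
  rewrite (@mask_nseq (map negb (take n m)) n) ?size_map //.
  by have := count_negb (take n m); rewrite Ht => H; congr (nseq _ _ ++ _); lia.
Qed.

Definition blocks a b c d : seq bool :=
  nseq a false ++ nseq b true ++ nseq c false ++ nseq d true.

Lemma ss_blocks_split a b c d : SS (blocks a b c d) ->
  exists a1 b1 c1 d1, [/\ a1 <= a, b1 <= b, c1 <= c, d1 <= d &
     blocks a1 b1 c1 d1 = blocks (a - a1) (b - b1) (c - c1) (d - d1)].
Proof.
move=> [x [_ /shuffle_mask [m [Hs H1 H2]]]].
move: Hs H1 H2; rewrite /blocks -(cats0 (nseq d true)) => Hs.
have Sa : size m = a + size (nseq b true ++ nseq c false ++ nseq d true ++ [::]).
  by rewrite Hs !size_cat !size_nseq.
have [a1 [Ha -> ->]] := mask_nseq_cat false Sa.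
have Sb : size (drop a m) = b + size (nseq c false ++ nseq d true ++ [::]).
  by rewrite size_drop Sa !size_cat !size_nseq; lia.
have [b1 [Hb -> ->]] := mask_nseq_cat true Sb.
have Sc : size (drop b (drop a m)) = c + size (nseq d true ++ [::]).
  by rewrite size_drop Sb !size_cat !size_nseq; lia.
have [c1 [Hc -> ->]] := mask_nseq_cat false Sc.
have Sd : size (drop c (drop b (drop a m))) = d + size ([::] : seq bool).
  by rewrite size_drop Sc !size_cat !size_nseq; lia.
have [d1 [Hd -> ->]] := mask_nseq_cat true Sd.
by rewrite !mask0 !cats0 => <- E; exists a1, b1, c1, d1; rewrite E.
Qed.

Lemma index_nseq_false k s : index true (nseq k false ++ s) = k + index true s.
Proof. by elim: k => //= k ->. Qed.

Lemma index_blocks a b c d :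
  index true (blocks a b c d) = a + (if b == 0 then c else 0).
Proof.
rewrite /blocks index_nseq_false; case: b => [|b] /=; last by rewrite addn0.
by rewrite index_nseq_false; case: d => //=; rewrite !addn0.
Qed.

Lemma count_blocks (x : bool) a b c d :
  count_mem x (blocks a b c d) = if x then b + d else a + c.
Proof. by rewrite /blocks !count_cat !count_nseq; case: x => /=; lia. Qed.

(* Two equal block words, the first with a shorter leading 0-block, whose
   1-blocks are not both empty, have few 0s in their third blocks: comparing
   the position of the first 1 and the number of 0s gives c1 + c2 <= a1 + a2. *)
Lemma blocks_eq_shorter_lead a1 b1 c1 d1 a2 b2 c2 d2 :
  blocks a1 b1 c1 d1 = blocks a2 b2 c2 d2 ->
  a1 < a2 -> 0 < b1 + b2 -> c1 + c2 <= a1 + a2.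
Proof.
move=> E lt_a nz_b.
have := congr1 (count_mem false) E; rewrite !count_blocks.
have := congr1 (index true) E; rewrite !index_blocks; clear E.
by case: b1 nz_b => [|b1]; case: b2 => [|b2] //=; lia.
Qed.

(* Hence the two halves of 0^a 1^b 0^c 1^d cannot be equal when a is odd,
   b > 0 and a < c: one half has the shorter leading 0-block. *)
Lemma blocks_halves_odd_lead a b c d a1 b1 c1 d1 :
  a1 <= a -> b1 <= b -> c1 <= c ->
  blocks a1 b1 c1 d1 = blocks (a - a1) (b - b1) (c - c1) (d - d1) ->
  a %% 2 = 1 -> 0 < b -> a < c -> False.
Proof.
move=> Ha Hb Hc E odd_a pos_b lt_ac.
case: (ltngtP a1 (a - a1)) => [lt|gt|eq]; last lia.
- by have := blocks_eq_shorter_lead E lt; lia.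
- by have := blocks_eq_shorter_lead (esym E) gt; lia.
Qed.

Lemma ss_blocks_odd_lead a b c d : SS (blocks a b c d) ->
  a %% 2 = 1 -> 0 < b -> a < c -> False.
Proof.
by move=> /ss_blocks_split [a1 [b1 [c1 [d1 [Ha Hb Hc _]]]]]; apply: blocks_halves_odd_lead.
Qed.

Lemma rev_negb_blocks a b c d : rev (map negb (blocks a b c d)) = blocks d c b a.
Proof. by rewrite /blocks !map_cat !map_nseq /= !rev_cat !rev_nseq -!catA. Qed.

(* The mirror statement, through the symmetry reversing the word and
   exchanging the letters. *)
Lemma ss_blocks_odd_tail a b c d : SS (blocks a b c d) ->
  d %% 2 = 1 -> 0 < c -> d < b -> False.
Proof.
move=> /ss_blocks_split [a1 [b1 [c1 [d1 [Ha Hb Hc Hd E]]]]].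
have := congr1 (fun s => rev (map negb s)) E; rewrite /= !rev_negb_blocks.
exact: blocks_halves_odd_lead.
Qed.

Lemma ss_blocks_parity a b c d : SS (blocks a b c d) ->
  (a + c) %% 2 = 0 /\ (b + d) %% 2 = 0.
Proof.
move=> H; have := ss_count_even false H; have := ss_count_even true H.
by rewrite !count_blocks.
Qed.

Lemma ss_blocks_square n : SS (blocks n n n n).
Proof.
exists (nseq n false ++ nseq n true); split => //.
exists [:: (nseq n false ++ nseq n true, nseq n false ++ nseq n true)].
by split; rewrite //= ?cats0 // /blocks -!catA.
Qed.

(* The automaton of 0*1*0*1*: state j in 1..4 means "reading the j-th block",
   5 is the sink (the junk state 0 is never reached from 1). *)
Definition block_step (k : nat) (b : bool) : nat :=
  match k, b with
  | 1, false => 1 | 1, true => 2 | 2, true => 2 | 2, false => 3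
  | 3, false => 3 | 3, true => 4 | 4, true => 4 | _, _ => 5
  end.

Definition block_run := foldl block_step.

Lemma block_step_le5 k b : block_step k b <= 5.
Proof. by case: k => [|[|[|[|[|k]]]]]; case: b. Qed.

Lemma block_step_mono k b : k <= 5 -> k <= block_step k b.
Proof. by case: k => [|[|[|[|[|[|k]]]]]] //; case: b. Qed.

Lemma block_run_mono k w : k <= 5 -> k <= block_run k w <= 5.
Proof.
elim: w k => /= [|a w IH] k Hk; first by rewrite leqnn.
have := block_step_mono a Hk; have := IH (block_step k a) (block_step_le5 _ _); lia.
Qed.

Lemma block_run5 w : block_run 5 w = 5.
Proof. by elim: w => //= a w; case: a. Qed.

Lemma block_run_cat k s1 s2 : block_run k (s1 ++ s2) = block_run (block_run k s1) s2.
Proof. exact: foldl_cat. Qed.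

Lemma block_run_rep k u i : block_run k u = k -> block_run k (rep i u) = k.
Proof.
move=> H; elim: i => // i IH.
by rewrite (_ : rep i.+1 u = u ++ rep i u) // block_run_cat H IH.
Qed.

Lemma size_rep i (t : seq bool) : size (rep i t) = i * size t.
Proof. by elim: i => // i IH; rewrite -[rep _ _]/(t ++ rep i t) size_cat IH. Qed.

Definition block_dfa (q : 'I_6) (b : bool) : 'I_6 := inord (block_step q b).

Lemma block_dfa_run (q : 'I_6) w : nat_of_ord (foldl block_dfa q w) = block_run q w.
Proof.
elim: w q => //= a w IH q.
by rewrite IH /block_dfa inordK // ltnS block_step_le5.
Qed.

Fixpoint block_count j k (w : seq bool) : nat :=
  if w is a :: w' then (block_step k a == j) + block_count j (block_step k a) w' else 0.

Lemma block_count_cat j k s1 s2 :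
  block_count j k (s1 ++ s2) = block_count j k s1 + block_count j (block_run k s1) s2.
Proof. by elim: s1 k => //= a s IH k; rewrite IH addnA. Qed.

Lemma block_count_le j k w : block_count j k w <= size w.
Proof.
by elim: w k => //= a w IH k; have := IH (block_step k a); case: (_ == _) => /=; lia.
Qed.

Lemma block_count_past j k w : j < k -> k <= 5 -> block_count j k w = 0.
Proof.
elim: w k => //= a w IH k lt_jk le_k5; have := block_step_mono a le_k5 => le_step.
rewrite IH; [|lia|exact: block_step_le5].
by have -> : (block_step k a == j) = false by apply/eqP; lia.
Qed.

Lemma block_count_future j k w : block_run k w < j -> k <= 5 -> block_count j k w = 0.
Proof.
elim: w k => //= a w IH k lt_j le_k5.
have /andP [H1 _] := block_run_mono w (block_step_le5 k a).
rewrite IH ?block_step_le5 //.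
by have -> : (block_step k a == j) = false by apply/eqP; lia.
Qed.

Lemma block_count_loop j k w : block_run k w = k -> k <= 5 ->
  block_count j k w = (if j == k then size w else 0).
Proof.
elim: w k => //= [|a w IH] k loop le_k5; first by case: (j == k).
have := block_step_mono a le_k5.
have /andP [H1 H2] := block_run_mono w (block_step_le5 k a).
move=> le_step; have fix_k : block_step k a = k by lia.
rewrite fix_k IH //; last by rewrite -{2}loop fix_k.
by case: (j =P k) => [-> |/eqP]; [rewrite eqxx | rewrite eq_sym => /negbTE ->].
Qed.

Lemma block_decode k w : 1 <= k <= 4 -> block_run k w <= 4 ->
  w = blocks (block_count 1 k w) (block_count 2 k w)
             (block_count 3 k w) (block_count 4 k w).
Proof.
elim: w k => [|a w IH] k Hk //= Hr.
have /andP [H1 H2] := block_run_mono w (block_step_le5 k a).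
have H3 : k <= block_step k a by apply: block_step_mono; lia.
rewrite {1}(IH (block_step k a)) //; last by lia.
have : block_step k a <= 4 by lia.
move: Hk => /andP []; case: k {IH Hr H1 H2 H3} => [|[|[|[|[|k]]]]] // _ _; case: a => //= _;
  rewrite ?(@block_count_past 1 2) ?(@block_count_past 1 3) ?(@block_count_past 2 3)
          ?(@block_count_past 1 4) ?(@block_count_past 2 4) ?(@block_count_past 3 4) //.
Qed.

Lemma block_run_nseq k a n : block_step k a = k -> block_run k (nseq n a) = k.
Proof. by move=> fix_k; elim: n => //= n; rewrite fix_k. Qed.

Lemma block_count_nseq j k a n : block_step k a = k -> k <= 5 ->
  block_count j k (nseq n a) = (if j == k then n else 0).
Proof. by move=> fix_k le_k5; rewrite block_count_loop ?size_nseq ?block_run_nseq. Qed.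

Lemma block_square n : 0 < n -> block_run 1 (blocks n n n n) = 4 /\
  forall j, 1 <= j <= 4 -> block_count j 1 (blocks n n n n) = n.
Proof.
case: n => // n _; rewrite /blocks.
have R1 : block_run 1 (nseq n.+1 false) = 1 by rewrite block_run_nseq.
have R2 : block_run 1 (nseq n.+1 true) = 2 by rewrite /= block_run_nseq.
have R3 : block_run 2 (nseq n.+1 false) = 3 by rewrite /= block_run_nseq.
have R4 : block_run 3 (nseq n.+1 true) = 4 by rewrite /= block_run_nseq.
split; first by rewrite !block_run_cat R1 R2 R3 R4.
move=> j Hj; rewrite !block_count_cat R1 R2 R3 block_count_nseq //.
rewrite [block_count j 1 (nseq n.+1 true)]/= block_count_nseq //.
rewrite [block_count j 2 (nseq n.+1 false)]/= block_count_nseq //.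
rewrite [block_count j 3 (nseq n.+1 true)]/= block_count_nseq //.
by move: Hj => /andP []; case: j => [|[|[|[|[|j]]]]] //= _ _; lia.
Qed.

(* Pumping with the loops of states p (first factor, length U) and q (second
   factor, length Y) changes the j-th block by [shift p q U Y j] letters per
   copy. *)
Definition shift (p q U Y j : nat) : nat :=
  (if j == p then U else 0) + (if j == q then Y else 0).

Lemma shift_support p q U Y : 1 <= p <= q -> q <= p.+1 -> q <= 4 -> 0 < U + Y ->
  [/\ 0 < shift p q U Y 1 + shift p q U Y 2 + shift p q U Y 3 + shift p q U Y 4,
      (shift p q U Y 1 == 0) || (shift p q U Y 3 == 0) &
      (shift p q U Y 2 == 0) || (shift p q U Y 4 == 0)].
Proof.
rewrite /shift; case: p => [|[|[|[|[|p]]]]] //; case: q => [|[|[|[|[|q]]]]] //= *;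
  split; rewrite ?addn0 ?add0n //; lia.
Qed.

(* The shifts are even by parity, and the
   first shifted block is then an odd block violating [ss_blocks_odd_lead]
   or [ss_blocks_odd_tail] in one of the two words. *)
Lemma no_odd_pumping n d1 d2 d3 d4 : n %% 2 = 1 ->
  0 < d1 + d2 + d3 + d4 -> (d1 == 0) || (d3 == 0) -> (d2 == 0) || (d4 == 0) ->
  d1 <= n -> d2 <= n -> d3 <= n -> d4 <= n ->
  SS (blocks (n - d1) (n - d2) (n - d3) (n - d4)) ->
  SS (blocks (n + d1) (n + d2) (n + d3) (n + d4)) -> False.
Proof.
move=> odd_n pos s13 s24 le1 le2 le3 le4 minus plus.
have [P13 P24] := ss_blocks_parity plus.
case: (posnP d1) => [d1_0|d1_pos]; last by apply: (ss_blocks_odd_lead minus); lia.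
case: (posnP d3) => [d3_0|d3_pos]; first case: (posnP d2) => [d2_0|d2_pos].
- by apply: (ss_blocks_odd_tail minus); lia.
- by apply: (ss_blocks_odd_tail plus); lia.
- by apply: (ss_blocks_odd_lead plus); lia.
Qed.

Section BlockPumping.
Variables x u v y z : seq bool.

Definition state_u := block_run 1 x.
Definition state_y := block_run 1 (x ++ u ++ v).
Hypothesis loop_u : block_run state_u u = state_u.
Hypothesis loop_y : block_run state_y y = state_y.
Hypothesis accept : block_run 1 (x ++ u ++ v ++ y ++ z) = 4.

Definition pumped i := x ++ rep i u ++ v ++ rep i y ++ z.

Lemma pumped1 : pumped 1 = x ++ u ++ v ++ y ++ z.
Proof. by rewrite /pumped /rep /= !cats0. Qed.

Lemma run_v : block_run state_u v = state_y.
Proof. by rewrite /state_y !block_run_cat -/state_u loop_u. Qed.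

Lemma run_z : block_run state_y z = 4.
Proof.
move: accept; rewrite (_ : x ++ u ++ v ++ y ++ z = (x ++ u ++ v) ++ y ++ z); last by rewrite -!catA.
by rewrite block_run_cat -/state_y block_run_cat loop_y.
Qed.

Lemma loop_states : 1 <= state_u <= state_y /\ state_y <= 4.
Proof.
have /andP [le1 le5] := block_run_mono x (isT : 1 <= 5).
have /andP [le_uy le_y5] := block_run_mono v le5; rewrite run_v in le_uy le_y5.
split; first by rewrite le1.
by case: ltngtP le_y5 run_z => // ->; rewrite block_run5.
Qed.

Lemma pumped_run i : block_run 1 (pumped i) = 4.
Proof.
rewrite /pumped !block_run_cat -/state_u (block_run_rep i loop_u) run_v.
by rewrite (block_run_rep i loop_y) run_z.
Qed.

Lemma pumped_count_factors i j : block_count j 1 (pumped i) =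
  block_count j 1 x + (if j == state_u then i * size u else 0) +
  block_count j state_u v + (if j == state_y then i * size y else 0) +
  block_count j state_y z.
Proof.
have [/andP [_ le_uy] le_y4] := loop_states.
have count_rep k t : block_run k t = k -> k <= 4 ->
    block_count j k (rep i t) = (if j == k then i * size t else 0).
  by move=> Lt le4; rewrite block_count_loop ?block_run_rep ?size_rep; last lia.
rewrite /pumped !block_count_cat -/state_u.
rewrite (block_run_rep _ loop_u) run_v (block_run_rep _ loop_y) !count_rep //; last lia.
by rewrite !addnA.
Qed.

Lemma pumped_count i j : block_count j 1 (pumped i) =
  block_count j 1 (pumped 0) + i * shift state_u state_y (size u) (size y) j.
Proof.
rewrite !pumped_count_factors /shift.
by case: (j == state_u); case: (j == state_y); rewrite /=; lia.
Qed.

(* If every block of x u v y z has n letters and v is shorter than a block,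
   the two loops are in the same or in adjacent blocks: a block strictly
   between them would lie inside v. *)
Lemma loops_adjacent n : size v < n ->
  (forall j, 1 <= j <= 4 -> block_count j 1 (pumped 1) = n) ->
  state_y <= state_u.+1.
Proof.
move=> short_v counts; have [/andP [le1 le_uy] le_y4] := loop_states.
rewrite leqNgt; apply/negP => far.
have := counts state_u.+1; rewrite pumped_count_factors.
have -> : (state_u.+1 == state_u) = false by rewrite gtn_eqF.
have -> : (state_u.+1 == state_y) = false by rewrite ltn_eqF.
rewrite (block_count_past _ far); last by rewrite (leq_trans le_y4).
rewrite block_count_future ?ltnSn //.
by have := block_count_le state_u.+1 state_u v; lia.
Qed.

Lemma pumped_blocks n :
  (forall j, 1 <= j <= 4 -> block_count j 1 (pumped 1) = n) ->
  let e := shift state_u state_y (size u) (size y) in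
  [/\ pumped 0 = blocks (n - e 1) (n - e 2) (n - e 3) (n - e 4),
      pumped 2 = blocks (n + e 1) (n + e 2) (n + e 3) (n + e 4) &
      forall j, 1 <= j <= 4 -> e j <= n].
Proof.
move=> counts e; have count1 j : 1 <= j <= 4 -> block_count j 1 (pumped 0) + e j = n.
  by move=> Hj; rewrite -(counts j Hj) (pumped_count 1) mul1n.
have decode i := block_decode (isT : 1 <= 1 <= 4) (eq_leq (pumped_run i)).
have minus j : 1 <= j <= 4 -> block_count j 1 (pumped 0) = n - e j.
  by move=> /count1 <-; rewrite addnK.
have plus j : 1 <= j <= 4 -> block_count j 1 (pumped 2) = n + e j.
  by move=> Hj; rewrite (pumped_count 2) -/e -(count1 j Hj); lia.
split; first by rewrite [LHS]decode !minus.
  by rewrite [LHS]decode !plus.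
by move=> j /count1 <-; rewrite leq_addl.
Qed.

End BlockPumping.

(* ss({0,1}^* ) is not context-free: pump 0^n 1^n 0^n 1^n with n odd and
   larger than the pumping constant, synchronised with the block automaton. *)
Theorem ss_all_words_not_context_free : ~ context_free SS.
Proof.
move=> [g Hg]; set P := pump_const g 'I_6; set n := (P + P).+1.
have n_odd : n %% 2 = 1 by rewrite /n; lia.
have [accept counts] := block_square (ltn0Sn (P + P)).
have long : P <= size (blocks n n n n).
  by rewrite /blocks !size_cat !size_nseq /n; lia.
have [x [u [v [y [z [Ew Huy short [Lu Ly] pumps]]]]]] :=
  sync_pumping block_dfa (inord 1) (proj1 (Hg _) (ss_blocks_square n)) long.
have start : nat_of_ord (inord 1 : 'I_6) = 1 by rewrite inordK.
have loop_u : block_run (state_u x) u = state_u x.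
  by have := congr1 val Lu; rewrite /= !block_dfa_run start.
have loop_y : block_run (state_y x u v) y = state_y x u v.
  by have := congr1 val Ly; rewrite /= !block_dfa_run start.
rewrite Ew in accept counts; rewrite -(pumped1 x u v y z) in counts.
have [E0 E2 bounded] := pumped_blocks loop_u loop_y accept counts.
have [range le_y4] := loop_states loop_u loop_y accept.
have short_v : size v < n.
  by have : size (u ++ v ++ y) <= P := short; rewrite !size_cat /n; lia.
have adjacent := loops_adjacent loop_u loop_y accept short_v counts.
have nonempty : 0 < size u + size y by move: Huy; rewrite -size_cat lt0n size_eq0.
have [pos s13 s24] := shift_support range adjacent le_y4 nonempty.
apply: (no_odd_pumping n_odd pos s13 s24); rewrite ?bounded //.
- by rewrite -E0; apply/Hg; exact: pumps.
- by rewrite -E2; apply/Hg; exact: pumps.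
Qed.

Theorem mainTheorem1 :
  ~ context_free (ss (@all_words bool)) /\
  exists L : language bool, regular L /\ ~ context_free (ss L).
Proof.
split; first exact: ss_all_words_not_context_free.
exists (@all_words bool); split; last exact: ss_all_words_not_context_free.
by exists (DFA (tt : unit) (fun _ => true) (fun _ _ => tt)).
Qed.
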